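(* Let $m\ge3$, $p\in[m]$, and let $\lambda_1,\lambda_2$ be $\mathbb{Z}_2$-characteristic maps over $P_m$ with $\lambda_1(p)=\lambda_2(p)=\mathbf a$. Then the D-J classes of $\lambda_1$ and $\lambda_2$ are $p$-adjacent if and only if $\lambda_2$ is obtained from $\lambda_1$ by replacing some (possibly none) of the $\mathbf b\mathbf c$-pieces of $\lambda_1$ by their inversions.
   Context: $P_m$ is the simplicial complex on $[m]$ with facets $\{i,i+1\}$ (mod $m$). Write $\mathbf a=(1,0)^T,\mathbf b=(0,1)^T,\mathbf c=(1,1)^T\in\mathbb{Z}_2^2$. A $\mathbb{Z}_2$-characteristic map over $P_m$ is a map $\lambda\colon[m]\to\{\mathbf a,\mathbf b,\mathbf c\}$ with $\lambda(i)\neq\lambda(i+1)$ for all $i$ (mod $m$), i.e. a cyclic word in $\mathbf a,\mathbf b,\mathbf c$ with no two cyclically consecutive equal letters; D-J equivalence means $\lambda'=\phi\circ\lambda$ for some $\phi\in GL(2,\mathbb{Z}_2)$ (equivalently, a permutation of the letters). The $\mathbf b\mathbf c$-pieces of $\lambda$ are the restrictions of $\lambda$ to the maximal cyclic intervals of consecutive vertices of $[m]\setminus\lambda^{-1}(\mathbf a)$; the inversion of a piece exchanges $\mathbf b$ and $\mathbf c$ on it. $p$-adjacency: for a simplicial complex $K$, the wedge $\mathrm{wed}_pK$ replaces vertex $p$ by $p_1,p_2$, its minimal non-faces being those of $K$ not containing $p$ and $(\tau\setminus\{p\})\cup\{p_1,p_2\}$ for minimal non-faces $\tau\ni p$; the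 link of $p_2$ (resp. $p_1$) is identified with $K$ via $p_1\mapsto p$ (resp. $p_2\mapsto p$). The projection of a characteristic map $\Lambda\colon V\to\mathbb{Z}_2^n$ at a vertex $v$ is $w\mapsto[\Lambda(w)]\in\mathbb{Z}_2^n/\langle\Lambda(v)\rangle$ on the link of $v$. Two D-J classes $\lambda_1,\lambda_2$ over $P_m$ are $p$-adjacent if some characteristic map $\Lambda$ over $\mathrm{wed}_pP_m$ (values in $\mathbb{Z}_2^3$, images of faces linearly independent) satisfies $\operatorname{proj}_{p_2}\Lambda\simeq\lambda_1$, $\operatorname{proj}_{p_1}\Lambda\simeq\lambda_2$. *)

From HB Require Import structures.
From mathcomp Require Import all_boot all_order all_algebra.
Set Implicit Arguments. Unset Strict Implicit. Unset Printing Implicit Defensive.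
Import GRing.Theory.
Local Open Scope ring_scope.

Definition va : 'rV['F_2]_2 := \row_(j < 2) (if val j == 0%N then 1 else 0).
Definition vb : 'rV['F_2]_2 := \row_(j < 2) (if val j == 1%N then 1 else 0).
Definition vc : 'rV['F_2]_2 := \row_(j < 2) 1.

Definition nxt (m : nat) (i : 'I_m) : 'I_m := ordS i.

Definition char_map_Pm (m : nat) (lam : 'I_m -> 'rV['F_2]_2) : Prop :=
  forall i : 'I_m, [/\ lam i \in [:: va; vb; vc] & lam i != lam (nxt i)].

Definition Pm_face (m : nat) (s : {set 'I_m}) : bool :=
  (#|s| <= 1)%N || [exists i : 'I_m, s == [set i; nxt i]].

Definition min_nonface (V : finType) (face : {set V} -> bool) (t : {set V}) : bool :=
  ~~ face t && [forall x in t, face (t :\ x)].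

(** The wedge wed_p K of a complex K on [m]: vertex set 'I_m + unit, where
    inl i (i <> p) is the vertex i, inl p is p1 and inr tt is p2. *)
Definition p1 (m : nat) (p : 'I_m) : 'I_m + unit := inl p.
Definition p2 (m : nat) : 'I_m + unit := inr tt.

Definition wed_mnf_of (m : nat) (p : 'I_m) (t : {set 'I_m}) : {set 'I_m + unit} :=
  if p \in t then (@inl 'I_m unit) @: t :|: [set p2 m]   (* (t \ {p}) u {p1,p2} *)
  else (@inl 'I_m unit) @: t.

Definition wed_face (m : nat) (face : {set 'I_m} -> bool) (p : 'I_m)
    (s : {set 'I_m + unit}) : bool :=
  ~~ [exists t : {set 'I_m}, min_nonface face t && (wed_mnf_of p t \subset s)].

Definition char_map (V : finType) (face : {set V} -> bool) (n : nat)
    (L : V -> 'rV['F_2]_n) : Prop :=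
  forall s : {set V}, face s ->
    row_free (\matrix_(k < #|s|) L (enum_val (A := mem s) k)).

(** "The projection of L at v, restricted to vertex w of the link
    identified with vertex idx w of P_m, is D-J equivalent to lam":
    there is a linear isomorphism phi : Z_2^n/<L v> -> Z_2^2 with
    phi [L w] = lam (idx w); equivalently a surjective linear map
    A : Z_2^n -> Z_2^2 with kernel exactly <L v> (i.e. phi composed with the
    quotient map) and L w * A = lam (idx w). *)
Definition proj_DJ_p2 (m n : nat) (L : 'I_m + unit -> 'rV['F_2]_n)
    (lam : 'I_m -> 'rV['F_2]_2) : Prop :=
  exists A : 'M['F_2]_(n, 2),
    [/\ row_full A, (kermx A == L (p2 m))%MS &
        forall i : 'I_m, L (inl i) *m A = lam i].

Definition proj_DJ_p1 (m n : nat) (p : 'I_m) (L : 'I_m + unit -> 'rV['F_2]_n)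
    (lam : 'I_m -> 'rV['F_2]_2) : Prop :=
  exists A : 'M['F_2]_(n, 2),
    [/\ row_full A, (kermx A == L (p1 p))%MS,
        L (p2 m) *m A = lam p &
        forall i : 'I_m, i != p -> L (inl i) *m A = lam i].

Definition p_adjacent (m : nat) (p : 'I_m) (lam1 lam2 : 'I_m -> 'rV['F_2]_2) : Prop :=
  exists L : 'I_m + unit -> 'rV['F_2]_3,
    [/\ char_map (wed_face (@Pm_face m) p) L,
        proj_DJ_p2 L lam1 & proj_DJ_p1 p L lam2].

Definition cyc_interval (m : nat) (S : {set 'I_m}) : Prop :=
  exists (i : 'I_m) (k : nat), S = [set iter (val t) (@nxt m) i | t : 'I_k.+1].

Definition bc_piece (m : nat) (lam : 'I_m -> 'rV['F_2]_2) (S : {set 'I_m}) : Prop :=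
  [/\ cyc_interval S, S \subset [set i | lam i != va] &
      forall T : {set 'I_m}, cyc_interval T -> S \subset T ->
        T \subset [set i | lam i != va] -> T = S].

Definition inv_bc (v : 'rV['F_2]_2) : 'rV['F_2]_2 :=
  if v == vb then vc else if v == vc then vb else v.

Definition obtained_by_inversions (m : nat) (lam1 lam2 : 'I_m -> 'rV['F_2]_2) : Prop :=
  exists Q : {set {set 'I_m}},
    (forall S, S \in Q -> bc_piece lam1 S) /\
    forall i : 'I_m,
      lam2 i = if [exists S in Q, i \in S] then inv_bc (lam1 i) else lam1 i.

From mathcomp Require Import all_boot all_order all_algebra zify.
From Stdlib Require Import ClassicalEpsilon.
Set Implicit Arguments. Unset Strict Implicit. Unset Printing Implicit Defensive.
Import GRing.Theory.
Local Open Scope ring_scope.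

(* Both sides are equivalent to lam1 and lam2 having the same a-positions.
   If L realises the adjacency, its two projections have kernels <L p2> and <L p1>.
   When lam1 i = a = lam1 p, the difference L i - L p lies in <L p2>, so its image under
   the other projection is 0 or lam2 p = a, which forces lam2 i = a; symmetrically.
   Conversely, when the a-positions agree, an explicit lift L has the two required
   projections; it is a characteristic map because a vanishing subsum over a face of
   wed_p P_m projects to vanishing sums of letters of lam1 and of lam2, and the faces of
   the wedge meet [m] \ {p} in at most an edge.  Finally, two consecutive letters other
   than a are b and c, so on each bc-piece lam2 either agrees with lam1 or is its
   inversion. *)

Lemma F2P (x : 'F_2) : x = 0 \/ x = 1.
Proof. by case: x => -[|[|//]] ?; [left | right]; apply/val_inj. Qed.

Lemma oppr_rV_F2 n (v : 'rV['F_2]_n) : - v = v.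
Proof. by apply/rowP => j; rewrite mxE; apply: oppr_pchar2; apply: pchar_Fp. Qed.

Lemma addr_eq0_F2 n (u v : 'rV['F_2]_n) : (u + v == 0) = (u == v).
Proof. by rewrite -[v]oppr_rV_F2 subr_eq0 oppr_rV_F2. Qed.

Definition row2 (x y : 'F_2) : 'rV['F_2]_2 := \row_(j < 2) (if val j == 0%N then x else y).

Lemma row2E (v : 'rV['F_2]_2) : v = row2 (v 0 0) (v 0 1).
Proof. by apply/rowP => -[[|[|]]] //= j; rewrite mxE; congr (v _ _); apply/val_inj. Qed.

Lemma row2_eqE x y x' y' : (row2 x y == row2 x' y') = (x == x') && (y == y').
Proof.
apply/eqP/andP => [/rowP eq_xy | [/eqP -> /eqP ->] //].
by move: (eq_xy 0) (eq_xy 1); rewrite !mxE /= => -> ->.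
Qed.

Lemma vaE : va = row2 1 0. Proof. by apply/rowP => -[[|[|]]] //= j; rewrite !mxE. Qed.
Lemma vbE : vb = row2 0 1. Proof. by apply/rowP => -[[|[|]]] //= j; rewrite !mxE. Qed.
Lemma vcE : vc = row2 1 1. Proof. by apply/rowP => -[[|[|]]] //= j; rewrite !mxE. Qed.

Definition letter (v : 'rV['F_2]_2) := v \in [:: va; vb; vc].

Lemma letterP v : letter v -> [\/ v = va, v = vb | v = vc].
Proof. by rewrite /letter !inE => /or3P [] /eqP ->; constructor. Qed.

Lemma row2_00 : row2 0 0 = 0.
Proof. by apply/rowP => j; rewrite !mxE if_same. Qed.

Lemma letter_neq0 v : letter v -> v != 0.
Proof. by rewrite -row2_00; case/letterP => ->; rewrite ?vaE ?vbE ?vcE row2_eqE. Qed.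

Lemma letter_eq_vaE v : letter v -> (v == va) = (v 0 1 == 0).
Proof. by case/letterP => ->; rewrite ?vaE ?vbE ?vcE row2_eqE !mxE. Qed.

Lemma inv_bcK : involutive inv_bc.
Proof.
move=> v; rewrite /inv_bc; have [->|nb] := eqVneq v vb; first by rewrite vbE vcE !row2_eqE.
have [->|nc] := eqVneq v vc; first by rewrite vbE vcE !row2_eqE.
by rewrite (negbTE nb) (negbTE nc).
Qed.

Lemma inv_bc_eq_va v : (inv_bc v == va) = (v == va).
Proof.
rewrite /inv_bc; have [->|_] := eqVneq v vb; first by rewrite vbE vcE vaE !row2_eqE.
by have [->|_] := eqVneq v vc; first by rewrite vbE vcE vaE !row2_eqE.
Qed.

Lemma inv_bc_unique u v : letter u -> letter v -> u != va -> v != va -> u != v ->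
  v = inv_bc u.
Proof.
by rewrite /inv_bc; do 2 case/letterP => ->; rewrite ?vaE ?vbE ?vcE !row2_eqE ?mxE.
Qed.

Lemma row_free_of_subsums_neq0 (V : finType) n (s : {set V}) (L : V -> 'rV['F_2]_n) :
  (forall T : {set V}, T \subset s -> \sum_(x in T) L x = 0 -> T = set0) ->
  row_free (\matrix_(k < #|s|) L (enum_val (A := mem s) k)).
Proof.
move=> subsums; rewrite -kermx_eq0; apply/rowV0P => c.
rewrite sub_kermx mulmx_sum_row => /eqP cM0.
pose K := [set k | c 0 k != 0]; pose T := (fun k => enum_val (A := mem s) k) @: K.
have Ts : T \subset s by apply/subsetP => _ /imsetP [k _ ->]; apply: enum_valP.
have sumT : \sum_(x in T) L x = 0.
  rewrite big_imset /=; last by move=> k l _ _; apply: enum_val_inj.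
  rewrite -[RHS]cM0 [RHS](bigID (fun k => c 0 k != 0)) /= [X in _ = _ + X]big1 ?addr0.
    apply: eq_big => k; rewrite inE // rowK.
    by case: (F2P (c 0 k)) => ->; rewrite ?eqxx ?scale1r.
  by move=> k; rewrite negbK => /eqP ->; rewrite scale0r.
apply/rowP => k; rewrite mxE; apply/eqP; apply: contraT => ck.
have : enum_val (A := mem s) k \in T by apply/imsetP; exists k; rewrite ?inE.
by rewrite (subsums T Ts sumT) inE.
Qed.

Lemma kermx_eq_line (F : fieldType) n (M : 'M[F]_(n.+1, n)) (v : 'rV[F]_n.+1) :
  row_full M -> v *m M = 0 -> v != 0 -> (kermx M == v)%MS.
Proof.
move=> /eqP fullM vM v0; have vK : (v <= kermx M)%MS by rewrite sub_kermx vM.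
by rewrite vK andbT -(mxrank_leqif_sup vK) mxrank_ker rank_rV v0 fullM subSnn.
Qed.

Lemma submx_line_F2 n (v y : 'rV['F_2]_n) : (v <= y)%MS -> v = 0 \/ v = y.
Proof.
case/submxP => D ->; rewrite (mx11_scalar D) mul_scalar_mx.
by case: (F2P (D 0 0)) => ->; [left; rewrite scale0r | right; rewrite scale1r].
Qed.

Lemma kermx_line_transfer n k l (M : 'M['F_2]_(n, k)) (N : 'M['F_2]_(n, l))
    (u x y : 'rV['F_2]_n) (w : 'rV['F_2]_l) :
  (kermx M == y)%MS -> u *m M = x *m M -> x *m N = 0 -> y *m N = w -> u *m N != 0 ->
  u *m N = w.
Proof.
move=> /andP [kerM _] uxM xN yN uN0.
have : (u - x <= y)%MS by rewrite (submx_trans _ kerM) // sub_kermx mulmxBl uxM subrr.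
case/submx_line_F2 => [/eqP | uxy].
  by rewrite subr_eq0 => /eqP ux; rewrite ux xN eqxx in uN0.
by rewrite -yN -uxy mulmxBl xN subr0.
Qed.

Lemma kermx_eq_mul0 (F : fieldType) n k (M : 'M[F]_(n, k)) (y : 'rV[F]_n) :
  (kermx M == y)%MS -> y *m M = 0.
Proof. by case/andP => _; rewrite sub_kermx => /eqP. Qed.

Section Cycle.
Variable m : nat.
Implicit Types i j k x : 'I_m.

Definition cyc_adj i j := (j == nxt i) || (i == nxt j).

Lemma cyc_adjC i j : cyc_adj i j = cyc_adj j i.
Proof. by rewrite /cyc_adj orbC. Qed.

Lemma val_nxt i : val (nxt i) = (if i.+1 == m then 0 else i.+1)%N.
Proof.
rewrite /nxt /ordS /=; have := ltn_ord i.
by case: eqP => [-> _|ne lt_im]; rewrite ?modnn // modn_small; lia.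
Qed.

Lemma cyc_adjE i j : cyc_adj i j ->
  [\/ j = i.+1 :> nat, i.+1 = m /\ j = 0 :> nat, i = j.+1 :> nat | j.+1 = m /\ i = 0 :> nat].
Proof.
by case/orP=> /eqP /(congr1 val); rewrite val_nxt; case: eqP => ? ->;
  [constructor 2 | constructor 1 | constructor 4 | constructor 3].
Qed.

Lemma cyc_adj_triangle i j k : i != j -> j != k -> i != k ->
  cyc_adj i j -> cyc_adj j k -> cyc_adj i k -> m = 3%N.
Proof.
rewrite -!val_eqE /= => ij jk ik /cyc_adjE a1 /cyc_adjE a2 /cyc_adjE a3.
have := ltn_ord i; have := ltn_ord j; have := ltn_ord k.
case: a1; case: a2; case: a3; lia.
Qed.

Lemma ord3_cover i j k x : m = 3%N -> i != j -> j != k -> i != k ->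
  [|| x == i, x == j | x == k].
Proof.
move=> m3; rewrite -!val_eqE /=.
have := ltn_ord i; have := ltn_ord j; have := ltn_ord k; have := ltn_ord x; lia.
Qed.

Lemma char_map_Pm_adj (lam : 'I_m -> 'rV['F_2]_2) i j :
  char_map_Pm lam -> cyc_adj i j -> lam i != lam j.
Proof.
by move=> lamP /orP [] /eqP ->; [case: (lamP i) | rewrite eq_sym; case: (lamP j)].
Qed.

Lemma Pm_min_nonface_pair i j :
  i != j -> ~~ cyc_adj i j -> min_nonface (@Pm_face m) [set i; j].
Proof.
move=> ij nadj; apply/andP; split.
  rewrite /Pm_face cards2 ij /=; apply/existsP => -[k /eqP ijk].
  move: (set21 i j) (set22 i j) ij nadj; rewrite ijk !inE /cyc_adj.
  by case/orP => /eqP-> /orP [] /eqP->; rewrite ?eqxx ?orbT.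
apply/forall_inP => x xij; rewrite /Pm_face.
by have := cardsD1 x [set i; j]; rewrite xij cards2 ij add1n => -[<-].
Qed.

Lemma P3_min_nonface_full : m = 3%N -> min_nonface (@Pm_face m) [set: 'I_m].
Proof.
move=> m3; apply/andP; split.
  rewrite /Pm_face cardsT card_ord m3 /=; apply/existsP => -[k /eqP full].
  have := leq_of_leqif (leq_card_setU [set k] [set nxt k]).
  by rewrite -full cardsT !cards1 card_ord.
apply/forallP => x; apply/implyP => _; apply/orP; right; apply/existsP; exists (nxt x).
apply/eqP/setP => y; rewrite !inE -!val_eqE /=.
by have := ltn_ord x; have := ltn_ord y; lia.
Qed.

End Cycle.

Section Wedge.
Variables (m : nat) (p : 'I_m).
Implicit Types (s T : {set 'I_m + unit}) (i j : 'I_m).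

Local Notation wface := (wed_face (@Pm_face m) p).

Definition wed_base T := [set i | (inl i \in T) && (i != p)].

Lemma wed_faceS s T : wface s -> T \subset s -> wface T.
Proof.
move=> sF sub_Ts; apply: contra sF => /existsP [t /andP [tN tT]].
by apply/existsP; exists t; rewrite tN (subset_trans tT).
Qed.

Lemma wed_nonface T t : min_nonface (@Pm_face m) t -> wed_mnf_of p t \subset T -> ~~ wface T.
Proof. by move=> tN tT; rewrite negbK; apply/existsP; exists t; rewrite tN. Qed.

Lemma wed_face_base_adj T i j : wface T -> i \in wed_base T -> j \in wed_base T -> i != j ->
  cyc_adj i j.
Proof.
rewrite !inE => TF /andP [iT ip] /andP [jT jp] ij; apply: contraTT TF => nadj.
apply: (wed_nonface (Pm_min_nonface_pair ij nadj)).
have -> : wed_mnf_of p [set i; j] = [set inl i; inl j].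
  by rewrite /wed_mnf_of !inE ![p == _]eq_sym (negbTE ip) (negbTE jp) imsetU !imset_set1.
by rewrite subUset !sub1set iT jT.
Qed.

Lemma wed_face_p_adj T i : wface T -> p1 p \in T -> p2 m \in T -> i \in wed_base T ->
  cyc_adj p i.
Proof.
rewrite inE => TF p1T p2T /andP [iT ip]; apply: contraTT TF => nadj.
apply: (wed_nonface (Pm_min_nonface_pair (i := p) (j := i) _ nadj)); first by rewrite eq_sym.
rewrite /wed_mnf_of !inE eqxx imsetU !imset_set1.
by rewrite !subUset !sub1set p1T iT p2T.
Qed.

Lemma wed_face_card_base T : wface T -> (#|wed_base T| <= 2)%N.
Proof.
move=> TF; rewrite leqNgt; apply/negP => /card_gt2P [i [j [k [[iJ jJ kJ] [ij jk ki]]]]].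
have ik : i != k by rewrite eq_sym.
have m3 := cyc_adj_triangle ij jk ik (wed_face_base_adj TF iJ jJ ij)
  (wed_face_base_adj TF jJ kJ jk) (wed_face_base_adj TF iJ kJ ik).
move: iJ jJ kJ; rewrite !inE => /andP [_ ip] /andP [_ jp] /andP [_ kp].
by case/or3P: (ord3_cover p m3 ij jk ik) => /eqP pE; rewrite pE eqxx in ip jp kp.
Qed.

Lemma wed_face_card_base_p1p2 T : wface T -> p1 p \in T -> p2 m \in T -> (#|wed_base T| <= 1)%N.
Proof.
move=> TF p1T p2T; rewrite leqNgt; apply/negP => /card_gt1P [i [j [iJ jJ ij]]].
have ip : i != p by move: iJ; rewrite inE => /andP [].
have jp : j != p by move: jJ; rewrite inE => /andP [].
have adj_ip : cyc_adj i p by rewrite cyc_adjC (wed_face_p_adj TF p1T p2T iJ).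
have adj_jp : cyc_adj j p by rewrite cyc_adjC (wed_face_p_adj TF p1T p2T jJ).
have m3 := cyc_adj_triangle ij jp ip (wed_face_base_adj TF iJ jJ ij) adj_jp adj_ip.
apply: negP TF; apply: (wed_nonface (P3_min_nonface_full m3)).
rewrite /wed_mnf_of inE subUset sub1set p2T andbT.
apply/subsetP => _ /imsetP [x _ ->].
case/or3P: (ord3_cover x m3 ij jp ip) => /eqP ->; last by [].
  by move: iJ; rewrite inE => /andP [].
by move: jJ; rewrite inE => /andP [].
Qed.

Lemma wed_sumE (V : nmodType) (F : 'I_m + unit -> V) T :
  \sum_(x in T) F x = (if p2 m \in T then F (p2 m) else 0) +
     (if p1 p \in T then F (p1 p) else 0) + \sum_(i in wed_base T) F (inl i).
Proof.
rewrite (big_sumType _ (fun x => x \in T)) /= addrC -addrA; congr (_ + _).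
  by rewrite big_mkcond (bigD1 tt) //= big_pred0 ?addr0 // => -[].
rewrite (bigID (pred1 p)) /=; congr (_ + _); last by apply: eq_bigl => i; rewrite inE.
rewrite big_mkcond (bigD1 p) //= eqxx andbT big1 ?addr0 // => i /negbTE ->.
by rewrite andbF.
Qed.

Lemma wed_base_eq0 T : p1 p \notin T -> p2 m \notin T -> wed_base T = set0 -> T = set0.
Proof.
move=> p1T p2T /setP baseT; apply/setP => -[i|[]]; rewrite inE; last exact: negbTE.
have := baseT i; rewrite !inE; have [->|_] := eqVneq i p; last by rewrite andbT.
by move=> _; apply: negbTE.
Qed.

End Wedge.

Lemma char_map_Pm_letter m (lam : 'I_m -> 'rV['F_2]_2) i : char_map_Pm lam -> letter (lam i).
Proof. by case/(_ i). Qed.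

Lemma sum_adjacent_neq0 m (lam : 'I_m -> 'rV['F_2]_2) (J : {set 'I_m}) :
  char_map_Pm lam -> (0 < #|J| <= 2)%N -> {in J &, forall i j, i != j -> cyc_adj i j} ->
  \sum_(i in J) lam i != 0.
Proof.
move=> lamP /andP [J_gt0 J_le2] adjJ.
have [/eqP/cards1P [i ->] | J_ne1] := eqVneq #|J| 1%N.
  by rewrite big_set1 letter_neq0 // char_map_Pm_letter.
have /cards2P [i [j [ij J2]]] : #|J| == 2%N by rewrite eqn_leq J_le2 ltn_neqAle eq_sym J_ne1.
by rewrite J2 big_setU1 ?inE //= big_set1 addr_eq0_F2 char_map_Pm_adj // adjJ // J2 !inE eqxx ?orbT.
Qed.

Section WedgeCharMap.
Variables (m : nat) (p : 'I_m) (lam1 lam2 : 'I_m -> 'rV['F_2]_2).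
Hypotheses (lam1P : char_map_Pm lam1) (lam2P : char_map_Pm lam2).
Variables (n : nat) (L : 'I_m + unit -> 'rV['F_2]_n) (A B : 'M['F_2]_(n, 2)).
Hypotheses (LA_p2 : L (p2 m) *m A = 0) (LA : forall i, L (inl i) *m A = lam1 i).
Hypotheses (LB_p1 : L (p1 p) *m B = 0) (LB_p2 : L (p2 m) *m B = lam2 p).
Hypothesis LB : forall i, i != p -> L (inl i) *m B = lam2 i.
Implicit Type T : {set 'I_m + unit}.

Lemma wed_sum_mulA T : (\sum_(x in T) L x) *m A =
  (if p1 p \in T then lam1 p else 0) + \sum_(i in wed_base p T) lam1 i.
Proof. by rewrite mulmx_suml (wed_sumE p) LA LA_p2 if_same add0r; under eq_bigr do rewrite LA. Qed.

Lemma wed_sum_mulB T : (\sum_(x in T) L x) *m B =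
  (if p2 m \in T then lam2 p else 0) + \sum_(i in wed_base p T) lam2 i.
Proof.
rewrite mulmx_suml (wed_sumE p) LB_p2 LB_p1 if_same addr0.
by congr (_ + _); apply: eq_bigr => i; rewrite inE => /andP [_ /LB].
Qed.

Lemma wed_face_sum_eq0 T : wed_face (@Pm_face m) p T -> \sum_(x in T) L x = 0 -> T = set0.
Proof.
move=> TF sum0; set J := wed_base p T.
have sumA : (if p1 p \in T then lam1 p else 0) + \sum_(i in J) lam1 i = 0.
  by rewrite -wed_sum_mulA sum0 mul0mx.
have sumB : (if p2 m \in T then lam2 p else 0) + \sum_(i in J) lam2 i = 0.
  by rewrite -wed_sum_mulB sum0 mul0mx.
have adjJ : {in J &, forall i j, i != j -> cyc_adj i j}.
  by move=> i j; apply: wed_face_base_adj TF.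
have [/cards0_eq J0 | J_gt0] := posnP #|J|.
  move: sumA sumB; rewrite J0 !big_set0 !addr0.
  have lam1p_neq0 := letter_neq0 (char_map_Pm_letter p lam1P).
  have lam2p_neq0 := letter_neq0 (char_map_Pm_letter p lam2P).
  case: ifP => [_ /eqP | /negbT p1T]; first by rewrite (negbTE lam1p_neq0).
  case: ifP => [_ _ /eqP | /negbT p2T _ _]; first by rewrite (negbTE lam2p_neq0).
  exact: (wed_base_eq0 p1T p2T J0).
have J_le2 : (0 < #|J| <= 2)%N by rewrite J_gt0 wed_face_card_base.
have p1T : p1 p \in T.
  apply: (contraTT _ (sum_adjacent_neq0 lam1P J_le2 adjJ)) => /negbTE p1T.
  by move/eqP: sumA; rewrite p1T add0r => ->.
have p2T : p2 m \in T.
  apply: (contraTT _ (sum_adjacent_neq0 lam2P J_le2 adjJ)) => /negbTE p2T.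
  by move/eqP: sumB; rewrite p2T add0r => ->.
have /cards1P [i J1] : #|J| == 1%N by rewrite eqn_leq J_gt0 wed_face_card_base_p1p2.
have iJ : i \in J by rewrite J1 set11.
move/eqP: sumA; rewrite p1T J1 big_set1 addr_eq0_F2 => /eqP lam1_pi.
by have := char_map_Pm_adj lam1P (wed_face_p_adj TF p1T p2T iJ); rewrite lam1_pi eqxx.
Qed.

Lemma char_map_wedge : char_map (wed_face (@Pm_face m) p) L.
Proof.
move=> s sF; apply: row_free_of_subsums_neq0 => T Ts.
exact/wed_face_sum_eq0/(wed_faceS sF).
Qed.

End WedgeCharMap.

Definition same_a_positions m (lam1 lam2 : 'I_m -> 'rV['F_2]_2) :=
  forall i, (lam1 i == va) = (lam2 i == va).

Lemma letter_coord1_eq u v : letter u -> letter v -> (u == va) = (v == va) -> u 0 1 = v 0 1.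
Proof.
move=> uL vL; rewrite (letter_eq_vaE uL) (letter_eq_vaE vL).
by case: (F2P (u 0 1)) => ->; case: (F2P (v 0 1)) => -> // /eqP.
Qed.

Lemma p_adjacent_same_a_positions m (p : 'I_m) (lam1 lam2 : 'I_m -> 'rV['F_2]_2) :
  char_map_Pm lam1 -> char_map_Pm lam2 -> lam1 p = va -> lam2 p = va ->
  p_adjacent p lam1 lam2 -> same_a_positions lam1 lam2.
Proof.
move=> lam1P lam2P lam1p lam2p [L [_ [A [_ kerA LA]] [B [_ kerB LB_p2 LB]]]] i.
have [-> | ip] := eqVneq i p; first by rewrite lam1p lam2p eqxx.
apply/eqP/eqP => lam_i.
- rewrite -(LB i ip); apply: (kermx_line_transfer (x := L (p1 p)) kerA).
  + by rewrite !LA lam_i lam1p.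
  + exact: kermx_eq_mul0 kerB.
  + by rewrite LB_p2 lam2p.
  + by rewrite LB // letter_neq0 ?char_map_Pm_letter.
- rewrite -(LA i); apply: (kermx_line_transfer (x := L (p2 m)) kerB).
  + by rewrite LB // LB_p2 lam_i lam2p.
  + exact: kermx_eq_mul0 kerA.
  + by rewrite LA lam1p.
  + by rewrite LA letter_neq0 ?char_map_Pm_letter.
Qed.

Definition row3 (x y z : 'F_2) : 'rV['F_2]_3 :=
  \row_(k < 3) (if val k == 0%N then x else if val k == 1%N then y else z).

Lemma row3_neq0 x y z : (x != 0) || (y != 0) || (z != 0) -> row3 x y z != 0.
Proof.
move=> xyz; apply: contraTneq xyz => /rowP xyz0.
by move: (xyz0 0) (xyz0 1) (xyz0 2); rewrite !mxE /= => -> -> ->.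
Qed.

Definition drop0 : 'M['F_2]_(3, 2) := \matrix_(r, c) (if val r == (val c).+1 then 1 else 0).
Definition drop1 : 'M['F_2]_(3, 2) :=
  \matrix_(r, c) (if val r == (if val c == 0%N then 0 else 2)%N then 1 else 0).

Lemma mul_drop0 x y z : row3 x y z *m drop0 = row2 y z.
Proof.
apply/rowP => -[[|[|]] //= ?];
  by rewrite !mxE !big_ord_recl big_ord0 !mxE /= ?mulr0 ?mulr1 ?add0r ?addr0.
Qed.

Lemma mul_drop1 x y z : row3 x y z *m drop1 = row2 x z.
Proof.
apply/rowP => -[[|[|]] //= ?];
  by rewrite !mxE !big_ord_recl big_ord0 !mxE /= ?mulr0 ?mulr1 ?add0r ?addr0.
Qed.

Lemma row_full_drop0 : row_full drop0.
Proof.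
apply/row_fullP; exists (\matrix_(r < 2, c < 3) (if val c == (val r).+1 then 1 else 0)).
apply/matrixP => -[[|[|[|]]] //= ?] [[|[|[|]]] //= ?];
  by rewrite !mxE !big_ord_recl big_ord0 !mxE /= ?mulr0 ?mulr1 ?add0r ?addr0.
Qed.

Lemma row_full_drop1 : row_full drop1.
Proof.
apply/row_fullP.
exists (\matrix_(r < 2, c < 3) (if val c == (if val r == 0%N then 0 else 2)%N then 1 else 0)).
apply/matrixP => -[[|[|[|]]] //= ?] [[|[|[|]]] //= ?];
  by rewrite !mxE !big_ord_recl big_ord0 !mxE /= ?mulr0 ?mulr1 ?add0r ?addr0.
Qed.

(* L p2 = e1, L p1 = e2 and L i = (lam2 i, lam1 i) glued along their common second
   coordinate: deleting coordinate 0 gives back lam1, deleting coordinate 1 gives lam2. *)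
Definition wedge_lift m (p : 'I_m) (lam1 lam2 : 'I_m -> 'rV['F_2]_2) (x : 'I_m + unit) :=
  match x with
  | inl i => if i == p then row3 0 1 0 else row3 (lam2 i 0 0) (lam1 i 0 0) (lam1 i 0 1)
  | inr _ => row3 1 0 0
  end.

Lemma same_a_positions_p_adjacent m (p : 'I_m) (lam1 lam2 : 'I_m -> 'rV['F_2]_2) :
  char_map_Pm lam1 -> char_map_Pm lam2 -> lam1 p = va -> lam2 p = va ->
  same_a_positions lam1 lam2 -> p_adjacent p lam1 lam2.
Proof.
move=> lam1P lam2P lam1p lam2p sameA; pose L := wedge_lift p lam1 lam2.
have LA_p2 : L (p2 m) *m drop0 = 0 by rewrite mul_drop0 row2_00.
have LA i : L (inl i) *m drop0 = lam1 i.
  by rewrite /L /=; case: eqP => [->|_]; rewrite mul_drop0 -?row2E // lam1p vaE.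
have LB_p1 : L (p1 p) *m drop1 = 0 by rewrite /L /= eqxx mul_drop1 row2_00.
have LB_p2 : L (p2 m) *m drop1 = lam2 p by rewrite mul_drop1 lam2p vaE.
have LB i : i != p -> L (inl i) *m drop1 = lam2 i.
  move=> /negbTE ip; rewrite /L /= ip mul_drop1.
  by rewrite (letter_coord1_eq _ _ (sameA i)) ?char_map_Pm_letter // -row2E.
exists L; split.
- exact: (char_map_wedge lam1P lam2P LA_p2 LA LB_p1 LB_p2 LB).
- exists drop0; split; [exact: row_full_drop0 | | exact: LA].
  apply: kermx_eq_line; [exact: row_full_drop0 | exact: LA_p2 |].
  by rewrite /L /=; apply: row3_neq0; rewrite oner_neq0.
- exists drop1; split; [exact: row_full_drop1 | | exact: LB_p2 | exact: LB].
  apply: kermx_eq_line; [exact: row_full_drop1 | exact: LB_p1 |].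
  by rewrite /L /= eqxx; apply: row3_neq0; rewrite oner_neq0 orbT.
Qed.

Lemma obtained_by_inversions_same_a_positions m (lam1 lam2 : 'I_m -> 'rV['F_2]_2) :
  obtained_by_inversions lam1 lam2 -> same_a_positions lam1 lam2.
Proof. by case=> Q [_ lam2E] i; rewrite lam2E; case: ifP; rewrite ?inv_bc_eq_va. Qed.

Definition asbool (P : Prop) : bool := if excluded_middle_informative P then true else false.

Lemma asboolP (P : Prop) : reflect P (asbool P).
Proof. by rewrite /asbool; case: excluded_middle_informative => h; constructor. Qed.

Lemma cyc_interval1 m (i : 'I_m) : cyc_interval [set i].
Proof.
exists i, 0%N; apply/setP => x; rewrite inE; apply/eqP/imsetP => [->|[t _ ->]].
  by exists ord0.
by rewrite (ord1 t).
Qed.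

Lemma exists_bc_piece m (lam : 'I_m -> 'rV['F_2]_2) i :
  lam i != va -> exists2 S, bc_piece lam S & i \in S.
Proof.
move=> lam_i; pose P n := asbool (exists S : {set 'I_m},
  [/\ cyc_interval S, i \in S, S \subset [set j | lam j != va] & #|S| = n]).
have P1 : P 1%N.
  apply/asboolP; exists [set i]; split; rewrite ?cards1 ?set11 //; first exact: cyc_interval1.
  by rewrite sub1set inE.
have P_le_m n : P n -> (n <= m)%N.
  by case/asboolP => S [_ _ _ <-]; rewrite (leq_trans (max_card _)) ?card_ord.
have [n /asboolP [S [Sint iS Sa <-]] maxS] := ex_maxnP (ex_intro P 1%N P1) P_le_m.
exists S; last exact: iS.
split=> // T Tint ST Ta; apply/eqP; rewrite eq_sym eqEcard ST /=; apply: maxS.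
by apply/asboolP; exists T; split; [exact: Tint | exact: (subsetP ST) | exact: Ta | by []].
Qed.

Section Pieces.
Variables (m : nat) (lam1 lam2 : 'I_m -> 'rV['F_2]_2).
Hypotheses (lam1P : char_map_Pm lam1) (lam2P : char_map_Pm lam2).
Hypothesis sameA : same_a_positions lam1 lam2.

Lemma agree_nxt j : lam1 j != va -> lam1 (nxt j) != va ->
  (lam2 (nxt j) == lam1 (nxt j)) = (lam2 j == lam1 j).
Proof.
move=> j_a nj_a; have [L1j lam1_j] := lam1P j; have [L2j lam2_j] := lam2P j.
have L1nj := char_map_Pm_letter (nxt j) lam1P; have L2nj := char_map_Pm_letter (nxt j) lam2P.
rewrite (inv_bc_unique L1j L1nj j_a nj_a lam1_j) (inv_bc_unique L2j L2nj _ _ lam2_j) -?sameA //.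
by rewrite (can_eq inv_bcK).
Qed.

Lemma agree_cyc_interval S : cyc_interval S -> S \subset [set i | lam1 i != va] ->
  {in S &, forall i j, (lam2 i == lam1 i) = (lam2 j == lam1 j)}.
Proof.
case=> i0 [k ->] Sa; pose it t := iter t (@nxt m) i0.
have it_a t : (t < k.+1)%N -> lam1 (it t) != va.
  move=> tk; have := subsetP Sa (it t); rewrite inE; apply.
  by apply/imsetP; exists (Ordinal tk).
suff agree_it t : (t < k.+1)%N -> (lam2 (it t) == lam1 (it t)) = (lam2 i0 == lam1 i0).
  by move=> _ _ /imsetP [s _ ->] /imsetP [t _ ->]; rewrite !agree_it ?ltn_ord.
elim: t => [//|t IHt] tk; rewrite /it iterS agree_nxt ?IHt ?it_a ?(ltnW tk) //.
exact: it_a tk.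
Qed.

Lemma same_a_positions_obtained_by_inversions : obtained_by_inversions lam1 lam2.
Proof.
exists [set S | asbool (bc_piece lam1 S) && [forall j in S, lam2 j != lam1 j]]; split.
  by move=> S; rewrite inE => /andP [/asboolP].
move=> i; case: ifP => [/existsP [S] | no_piece].
  rewrite inE => /andP [/andP [/asboolP [_ Sa _] /forall_inP differ] iS].
  have i_a : lam1 i != va by have := subsetP Sa i iS; rewrite inE; apply.
  apply: inv_bc_unique; rewrite ?char_map_Pm_letter //; first by rewrite -sameA.
  by rewrite eq_sym differ.
have [i_a | i_a] := eqVneq (lam1 i) va; first by apply/eqP; rewrite i_a -sameA i_a.
have [S Spiece iS] := exists_bc_piece i_a; have [Sint Sa _] := Spiece.
apply/eqP; apply: contraFT no_piece => lam2_i; apply/existsP; exists S.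
rewrite inE iS andbT (introT (asboolP _) Spiece); apply/forall_inP => j jS.
by rewrite (agree_cyc_interval Sint Sa jS iS).
Qed.

End Pieces.

Theorem mainTheorem3 (m : nat) (hm : (3 <= m)%N) (p : 'I_m)
    (lam1 lam2 : 'I_m -> 'rV['F_2]_2)
    (h1 : char_map_Pm lam1) (h2 : char_map_Pm lam2)
    (h1p : lam1 p = va) (h2p : lam2 p = va) :
  p_adjacent p lam1 lam2 <-> obtained_by_inversions lam1 lam2.
Proof.
split=> [adj12 | inv12].
- have sameA := p_adjacent_same_a_positions h1 h2 h1p h2p adj12.
  exact: same_a_positions_obtained_by_inversions h1 h2 sameA.
- have sameA := obtained_by_inversions_same_a_positions inv12.
  exact: same_a_positions_p_adjacent h1 h2 h1p h2p sameA.
Qed.
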